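(* Let $p$ be a prime number and let $x,y,z\in\mathbb{N}$ with $x\le y\le z$ satisfy $\frac{4}{p}=\frac{1}{x}+\frac{1}{y}+\frac{1}{z}$. If $\gcd(y,p)=p$, then $\gcd(z,p)=p$.
   Context: $\mathbb{N}$ denotes the positive integers. *)

From mathcomp Require Import all_boot all_order all_algebra.

(** If p | y but p does not divide z, write y = p b. Since 4/p <= 3/x, the
    smallest denominator satisfies x < p, so p divides neither x nor z, and
    clearing denominators gives x z (4b - 1) = p b (z + x); hence 4b - 1 = k p
    and k/b = 1/x + 1/z. Then z (x k - b) = b x with x k - b >= 1, and z >= y = p b
    forces p <= x, a contradiction. *)
From mathcomp Require Import all_boot all_order all_algebra.
From mathcomp Require Import ring zify.
Import GRing.Theory Num.Theory.

Lemma unit_fraction_sum3_natE {n p x y z : nat} :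
  0 < p -> 0 < x -> 0 < y -> 0 < z ->
  (n%:R / p%:R = 1 / x%:R + 1 / y%:R + 1 / z%:R :> rat)%R ->
  n * x * y * z = p * (y * z + x * z + x * y).
Proof.
have natr_neq0 (m : nat) : 0 < m -> (m%:R : rat) != 0%R by rewrite pnatr_eq0 -lt0n.
move=> /natr_neq0 p0 /natr_neq0 x0 /natr_neq0 y0 /natr_neq0 z0 E.
apply/eqP; rewrite -(eqr_nat rat); apply/eqP.
transitivity (n%:R / p%:R * (p%:R * x%:R * y%:R * z%:R) : rat)%R.
  by rewrite !natrM; field.
by rewrite E !natrM !natrD !natrM; field; rewrite x0 y0 z0.
Qed.

Lemma unit_fraction_sum3_smallest_bound {n p x y z : nat} :
  0 < y -> 0 < z -> x <= y -> y <= z ->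
  n * x * y * z = p * (y * z + x * z + x * y) -> n * x <= 3 * p.
Proof.
move=> y0 z0 xy yz E.
rewrite -(@leq_pmul2r (y * z)) ?muln_gt0 ?y0 //.
have xz : x * z <= y * z by rewrite leq_mul2r xy orbT.
have xy' : x * y <= y * z by rewrite mulnC leq_mul2l (leq_trans xy yz) orbT.
by rewrite !mulnA E (mulnC 3 p) -!mulnA leq_mul2l; apply/orP; right; lia.
Qed.

Lemma unit_fraction_pair_bound {p x z b k : nat} :
  0 < x -> 0 < b -> b * p <= z -> x * z * k = b * (z + x) -> p <= x.
Proof.
move=> x0 b0 pbz E.
have D : z * (x * k - b) = b * x by rewrite mulnBr; nia.
have xkb : 0 < x * k - b.
  by rewrite lt0n; apply/eqP => e; move: D; rewrite e muln0; nia.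
have : p * b * (x * k - b) <= b * x by rewrite -D leq_mul2r (mulnC p b) pbz orbT.
rewrite mulnAC (mulnC b x) leq_pmul2r //.
by apply: leq_trans; rewrite leq_pmulr.
Qed.

Theorem lemma4 (p x y z : nat) :
  prime p -> 0 < x -> 0 < y -> 0 < z -> x <= y -> y <= z ->
  (4%:R / p%:R = 1 / x%:R + 1 / y%:R + 1 / z%:R :> rat)%R ->
  gcdn y p = p -> gcdn z p = p.
Proof.
move=> pp x0 y0 z0 xy yz H /gcdn_idPr /dvdnP[b yb].
have p0 := prime_gt0 pp.
have E := unit_fraction_sum3_natE p0 x0 y0 z0 H.
have xp : x < p by move: (unit_fraction_sum3_smallest_bound y0 z0 xy yz E); lia.
apply/gcdn_idPr/negPn/negP => pNz.
have pNx : ~~ (p %| x) by rewrite gtnNdvd.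
subst y; have b0 : 0 < b by move: y0; rewrite muln_gt0 => /andP[].
have reduced : x * z * (4 * b - 1) = p * (b * (z + x)).
  by apply/eqP; rewrite -(eqn_pmul2l p0); apply/eqP; move: E; nia.
have /dvdnP[k hk] : p %| 4 * b - 1.
  have : p %| x * z * (4 * b - 1) by rewrite reduced dvdn_mulr.
  by rewrite !Euclid_dvdM // (negbTE pNx) (negbTE pNz).
have unit_pair : x * z * k = b * (z + x).
  by apply/eqP; rewrite -(eqn_pmul2l p0); apply/eqP; move: reduced; rewrite hk; lia.
by move: (unit_fraction_pair_bound x0 b0 yz unit_pair); rewrite leqNgt xp.
Qed.
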